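(* There exists a countable collection $\mathcal{L}$ of languages (over $\mathcal{X}=\mathbb{N}^2$) with closure dimension $0$ such that for every $\varepsilon>0$ and every $n\in\mathbb{N}$, there is no $\varepsilon$-DP randomized map $A:\mathcal{X}^n\to\mathcal{X}$ satisfying $\Pr[A(x_1,\dots,x_n)\in K\setminus\{x_1,\dots,x_n\}]\ge 2/3$ for every $K\in\mathcal{L}$ and every $n$ distinct elements $x_1,\dots,x_n\in K$ (equivalently, every length-$n$ prefix of an enumeration of $K$ without repetitions).
   Context: A language is an infinite subset of $\mathcal{X}$. For a collection $\mathcal{L}'$, $\mathrm{Cl}(\mathcal{L}')=\bigcap_{L\in\mathcal{L}'}L$; the closure dimension of $\mathcal{L}$ is the smallest $d\in\{-1\}\cup\mathbb{N}$ such that every subcollection $\mathcal{L}'\subseteq\mathcal{L}$ has $|\mathrm{Cl}(\mathcal{L}')|=\infty$ or $|\mathrm{Cl}(\mathcal{L}')|\le d$. A randomized map $A:\mathcal{X}^n\to\mathcal{X}$ is $\varepsilon$-DP if for all $X,X'\in\mathcal{X}^n$ differing in exactly one coordinate and all events $E$, $\Pr[A(X)\in E]\le e^\varepsilon\Pr[A(X')\in E]$. *)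

From HB Require Import structures.
From mathcomp Require Import all_boot all_order all_algebra.
From mathcomp Require Import all_classical all_reals.
From mathcomp Require Import ereal measure probability.
From mathcomp Require Import sequences exp.
Set Implicit Arguments. Unset Strict Implicit. Unset Printing Implicit Defensive.
Import Order.TTheory GRing.Theory Num.Theory.
Local Open Scope classical_set_scope.
Local Open Scope ring_scope.

Definition X : Type := (nat * nat)%type.
HB.instance Definition _ := Pointed.on X.
HB.instance Definition _ := @isMeasurable.Build default_measure_display
  X discrete_measurable discrete_measurable0
  discrete_measurableC discrete_measurableU.

Definition language (K : set X) : Prop := infinite_set K.

(** Closure of a subcollection: the intersection of its members
    (the intersection of the empty collection is all of X). *)
Definition Cl (L' : set (set X)) : set X := \bigcap_(K in L') K.

(** [closure_bound L d] : every subcollection L' of L has |Cl(L')| = oo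
    or |Cl(L')| <= d  (d ranges over {-1} u N, represented in int). *)
Definition closure_bound (L : set (set X)) (d : int) : Prop :=
  forall L' : set (set X), L' `<=` L ->
    infinite_set (Cl L') \/
    (exists s : seq X, Cl L' = [set` s] /\ ((size s)%:Z <= d)%R).

Definition closure_dimension (L : set (set X)) (d : int) : Prop :=
  (-1 <= d)%R /\ closure_bound L d /\
  forall d' : int, (-1 <= d')%R -> closure_bound L d' -> (d <= d')%R.

Definition neighbors n (x x' : 'I_n -> X) : Prop :=
  exists i : 'I_n, x i <> x' i /\ forall j : 'I_n, j != i -> x j = x' j.

Definition randomized_map (R : realType) (n : nat) :=
  ('I_n -> X) -> probability X R.

Definition eps_DP (R : realType) n (eps : R) (A : randomized_map R n) : Prop :=
  forall x x' : 'I_n -> X, neighbors x x' ->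
  forall E : set X, measurable E ->
    (A x E <= (expR eps)%:E * A x' E)%E.

From HB Require Import structures.
From mathcomp Require Import all_boot all_order all_algebra.
From mathcomp Require Import all_classical all_reals.
From mathcomp Require Import ereal measure probability sequences exp.
Import Order.TTheory GRing.Theory Num.Theory.
Local Open Scope classical_set_scope.
Local Open Scope ring_scope.

(* The collection is the set of rows {j} x N.  Distinct rows are disjoint, so a
   subcollection with two members has empty closure, while any other one
   contains a whole row in its closure: the closure dimension is 0.
   If A were eps-DP and generated for every row, then on the dataset listing n
   points of row j it would put mass 2/3 on row j; group privacy along the n
   coordinates moves at least e^(-n eps) * 2/3 of that mass to one fixed
   dataset, whose output distribution would then give uniformly positive mass
   to infinitely many disjoint rows. *)

Lemma trivIset_uniform_mass_le0 {d} {T : measurableType d} {R : realType}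
    (P : probability T R) {F : nat -> set T} {c : R} :
  (forall j, measurable (F j)) -> trivIset setT F ->
  (forall j, (c%:E <= P (F j))%E) -> c <= 0.
Proof.
move=> mF tF cF; rewrite leNgt; apply/negP => c_gt0.
set m := Num.Def.archi_bound c^-1.
have mc_gt1 : 1 < c *+ m.
  by rewrite -mulr_natr -ltr_pdivrMl // mulr1 archi_boundP // invr_ge0 ltW.
have mU : measurable (\big[setU/set0]_(i < m) F i).
  by apply: bigsetU_measurable => i _; exact: mF.
have mass_gt1 : ((c *+ m)%:E <= P (\big[setU/set0]_(i < m) F i))%E.
  have -> : c *+ m = \sum_(i < m) c by rewrite sumr_const card_ord.
  rewrite measure_bigsetU // -sumEFin.
  by apply: lee_sum => i _; exact: cF.
have := le_trans mass_gt1 (probability_le1 P mU).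
by rewrite lee_fin leNgt mc_gt1.
Qed.

Definition hybrid {n} (x x' : 'I_n -> X) (k : nat) : 'I_n -> X :=
  fun i => if (i < k)%N then x' i else x i.

Lemma hybrid_size {n} (x x' : 'I_n -> X) : hybrid x x' n = x'.
Proof. by apply/funext => i; rewrite /hybrid ltn_ord. Qed.

Lemma hybridS_eq_or_neighbors {n} (x x' : 'I_n -> X) k : (k < n)%N ->
  hybrid x x' k = hybrid x x' k.+1 \/ neighbors (hybrid x x' k) (hybrid x x' k.+1).
Proof.
move=> kn; set ik := Ordinal kn.
have hybrid_ne i : i != ik -> hybrid x x' k i = hybrid x x' k.+1 i.
  move=> /eqP neq; rewrite /hybrid (ltnS i k) (leq_eqVlt i k).
  suff /negbTE-> : nat_of_ord i != k by [].
  by apply/eqP => ik_eq; apply: neq; exact: val_inj.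
have [eq_k|ne_k] := eqVneq (x' ik) (x ik).
  left; apply/funext => i; have [->|/hybrid_ne//] := eqVneq i ik.
  by rewrite /hybrid ltnn ltnSn eq_k.
right; exists ik; split; last by move=> j /hybrid_ne.
by rewrite /hybrid ltnn ltnSn; apply/eqP; rewrite eq_sym.
Qed.

Section GroupPrivacy.
Context {R : realType} {n : nat} {eps : R} {A : randomized_map R n}.
Hypotheses (dpA : eps_DP eps A) (eps_ge0 : 0 <= eps).

Lemma eps_DP_step (x x' : 'I_n -> X) (E : set X) :
  x = x' \/ neighbors x x' -> (A x E <= (expR eps)%:E * A x' E)%E.
Proof.
case=> [<-|nxx']; last exact: dpA.
apply: lee_pemull; first exact: measure_ge0.
by rewrite lee_fin (le_trans _ (expR_ge1Dx eps)) // lerDl.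
Qed.

Lemma eps_DP_group (x x' : 'I_n -> X) (E : set X) :
  (A x E <= (expR eps ^+ n)%:E * A x' E)%E.
Proof.
suff hybrid_le k : (k <= n)%N ->
    (A x E <= (expR eps ^+ k)%:E * A (hybrid x x' k) E)%E.
  by rewrite -(hybrid_size x x') hybrid_le.
elim: k => [_|k IHk kn]; first by rewrite expr0 mul1e.
apply: le_trans (IHk (ltnW kn)) _.
rewrite exprSr EFinM -muleA; apply: lee_wpmul2l.
  by rewrite lee_fin exprn_ge0 // expR_ge0.
exact/eps_DP_step/hybridS_eq_or_neighbors.
Qed.

Lemma eps_DP_mass_lower_bound (x x' : 'I_n -> X) (E : set X) (c : R) :
  (c%:E <= A x E)%E -> (((expR eps ^+ n)^-1 * c)%:E <= A x' E)%E.
Proof.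
move=> cE; have en_gt0 : 0 < expR eps ^+ n by rewrite exprn_gt0 // expR_gt0.
have mass_le := le_trans cE (eps_DP_group x x' E).
rewrite EFinM; apply: le_trans (lee_wpmul2l _ mass_le) _.
  by rewrite lee_fin invr_ge0 ltW.
by rewrite muleA -EFinM mulVf ?gt_eqF // mul1e.
Qed.
End GroupPrivacy.

Lemma Cl_sub {L' : set (set X)} {K : set X} : L' K -> Cl L' `<=` K.
Proof. exact: bigcap_inf. Qed.

Lemma closure_bound_ge0 {L L' : set (set X)} {d : int} :
  L' `<=` L -> finite_set (Cl L') -> closure_bound L d -> 0 <= d.
Proof.
move=> sL' finCl /(_ L' sL') [/(_ finCl)//|[s [_ size_le]]].
exact: le_trans size_le.
Qed.

Definition row_set (j : nat) : set X := [set p | p.1 = j].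

Definition rows : set (set X) := range row_set.

Lemma row_set_infinite j : infinite_set (row_set j).
Proof.
set f := fun k : nat => (j, k) : X.
move=> /(@finite_preimage _ _ _ f) fin_pre; apply: infinite_nat.
have -> : [set: nat] = f @^-1` row_set j by apply/seteqP; split.
by apply: fin_pre => a b _ _ [].
Qed.

Lemma row_set_trivIset : trivIset setT row_set.
Proof. by move=> i j _ _ [p [<- <-]]. Qed.

Lemma closure_bound_rows : closure_bound rows 0.
Proof.
move=> L' sL'.
have [[j1 [j2 [ne12 [L'j1 L'j2]]]]|same_row] :=
  pselect (exists j1 j2, j1 <> j2 /\ L' (row_set j1) /\ L' (row_set j2)).
  right; exists [::]; split => //; apply/seteqP; split => // p Clp.
  by case: ne12; rewrite -(Cl_sub L'j1 _ Clp) -(Cl_sub L'j2 _ Clp).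
left.
have [j L'_row] : exists j, forall K, L' K -> K = row_set j.
  have [[K L'K]|L'0] := pselect (exists K, L' K); last first.
    by exists 0%N => K L'K; exfalso; apply: L'0; exists K.
  have [j _ Kj] := sL' K L'K; exists j => K' L'K'.
  have [j' _ Kj'] := sL' K' L'K'; rewrite -Kj'; congr row_set.
  by apply: contrapT => ne; apply: same_row; exists j', j; rewrite Kj Kj'.
apply: (sub_infinite_set _ (row_set_infinite j)) => p rowp K L'K.
by rewrite (L'_row K L'K).
Qed.

Lemma closure_dimension_rows : closure_dimension rows 0.
Proof.
split=> //; split=> [|d _ cb]; first exact: closure_bound_rows.
set L01 := [set row_set 0; row_set 1].
have L01_rows : L01 `<=` rows by move=> K [->|->]; [exists 0%N|exists 1%N].
apply: (closure_bound_ge0 L01_rows _ cb).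
have -> : Cl L01 = set0.
  apply/seteqP; split => // p Clp.
  have := Cl_sub (or_introl erefl) _ Clp.
  by rewrite /row_set /= (Cl_sub (or_intror erefl) _ Clp).
exact: finite_set0.
Qed.

Theorem corollaryD1 :
  exists L : set (set X),
    countable L /\
    (forall K, L K -> language K) /\
    closure_dimension L 0 /\
    forall (R : realType) (eps : R), 0 < eps -> forall n : nat,
      ~ exists A : randomized_map R n,
          eps_DP eps A /\
          forall K : set X, L K ->
          forall x : 'I_n -> X, injective x -> (forall i, K (x i)) ->
            ((2 / 3)%:E <= A x (K `\` range x))%E.
Proof.
exists rows; split; first exact: card_image_le.
split; first by move=> K [j _ <-]; exact: row_set_infinite.
split; first exact: closure_dimension_rows.
move=> R eps eps_gt0 n [A [dpA learnA]].
set c := (expR eps ^+ n)^-1 * (2 / 3).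
have c_gt0 : 0 < c by rewrite mulr_gt0 ?invr_gt0 ?exprn_gt0 ?expR_gt0.
suff : c <= 0 by rewrite leNgt c_gt0.
pose x0 : 'I_n -> X := fun=> (0, 0)%N.
apply: (trivIset_uniform_mass_le0 (A x0) (fun=> I) row_set_trivIset) => j.
pose xj : 'I_n -> X := fun i => (j, nat_of_ord i).
have xj_inj : injective xj by move=> a b [/val_inj].
apply: (eps_DP_mass_lower_bound dpA (ltW eps_gt0) xj).
apply: le_trans (learnA _ (ex_intro2 _ _ j I erefl) xj xj_inj (fun=> erefl)) _.
by apply: le_measure; rewrite ?inE //; apply: subDsetl.
Qed.
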